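(* Let the alphabet be countable and $\mu$ a probability on sentences. The following are equivalent: (1) $\mu$ is Gaifman; (2) $\mu(r=s)=\lim_{n\to\infty}\mu(\bigwedge_{i=1}^n((r\,t_i)=(s\,t_i)))$ for every pair $r,s$ of closed terms of the same function type $\alpha\to\beta$, where $t_1,t_2,\dots$ is an enumeration of all closed terms of type $\alpha$; (3) $\mu(r\neq s)=\lim_{n\to\infty}\mu(\bigvee_{i=1}^n((r\,t_i)\neq(s\,t_i)))$ for every such pair $r,s$ and enumeration; (4) $\mu(\exists x.\varphi)=\lim_{n\to\infty}\mu(\bigvee_{i=1}^n\varphi\{x/t_i\})$ for every formula $\varphi$ with a single free variable $x$, of type $\alpha$ say, where $t_1,t_2,\dots$ enumerates all closed terms of type $\alpha$; (5) $\mu(\forall x.\varphi)=\lim_{n\to\infty}\mu(\bigwedge_{i=1}^n\varphi\{x/t_i\})$ for every such $\varphi$ and enumeration. Moreover, in each case the enumeration $t_1,t_2,\dots$ may be replaced by one that contains a single representative from each equivalence class of closed terms of type $\alpha$ under the relation: $t$ and $t'$ are equivalent iff $t=t'$ is valid.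
   Context: Setting: higher-order logic (Church's simple theory of types, without a description operator), with Henkin semantics; an alphabet is countable if its set of constants is countable. Types are generated from $o$ and $\imath$ by $\alpha\to\beta$; terms are built by $\lambda$-abstraction and application; $\forall x.\varphi$ is $\lambda x.\varphi=\lambda x.\top$ and $\exists x.\varphi$ is $\lambda x.\varphi\neq\lambda x.\bot$. Formulas are terms of type $o$, sentences closed formulas; $\mathcal S$ is the set of sentences; $\varphi\{x/t\}$ denotes substitution. A sentence is valid if true in every interpretation. A probability on sentences is a non-negative $\mu:\mathcal S\to\mathbb R$ with $\mu(\varphi)=1$ for valid $\varphi$ and $\mu(\varphi\vee\psi)=\mu(\varphi)+\mu(\psi)$ whenever $\neg(\varphi\wedge\psi)$ is valid. $\mu$ is Gaifman if for every pair $r,s$ of closed terms of the same function type $\alpha\to\beta$, $\mu(r=s)=\inf_{\{t_1,\dots,t_n\}}\mu(\bigwedge_{i=1}^n((r\,t_i)=(s\,t_i)))$ over all finite sets of closed terms of type $\alpha$. *)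

From Stdlib Require Import Reals List.
Import ListNotations.
Open Scope R_scope.

(* Types of Church's simple theory of types: generated from o and iota *)
Inductive ty : Type := To | Ti | Tarr (a b : ty).

Record alphabet := { const : Type; ctype : const -> ty }.

Inductive var : list ty -> ty -> Type :=
| VZ (G : list ty) (a : ty) : var (a :: G) a
| VS (G : list ty) (a b : ty) : var G a -> var (b :: G) a.
Arguments VZ {G a}.
Arguments VS {G a b}.

Inductive tm (A : alphabet) : list ty -> ty -> Type :=
| tvar G a : var G a -> tm A G a
| tcon G (c : const A) : tm A G (ctype A c)
| tapp G a b : tm A G (Tarr a b) -> tm A G a -> tm A G b
| tlam G a b : tm A (a :: G) b -> tm A G (Tarr a b)
| teq G a : tm A G (Tarr a (Tarr a To))
| ttop G : tm A G To
| tbot G : tm A G To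
| tnot G : tm A G (Tarr To To)
| tand G : tm A G (Tarr To (Tarr To To))
| tor G : tm A G (Tarr To (Tarr To To)).
Arguments tvar {A G a}.
Arguments tcon {A G}.
Arguments tapp {A G a b}.
Arguments tlam {A G a b}.
Arguments teq {A G}.
Arguments ttop {A G}.
Arguments tbot {A G}.
Arguments tnot {A G}.
Arguments tand {A G}.
Arguments tor {A G}.

Definition closed (A : alphabet) (a : ty) := tm A [] a.
Definition sentence (A : alphabet) := tm A [] To.

Definition mkeq {A G a} (r s : tm A G a) : tm A G To := tapp (tapp (teq a) r) s.
Definition mkneg {A G} (p : tm A G To) : tm A G To := tapp tnot p.
Definition mkneq {A G a} (r s : tm A G a) : tm A G To := mkneg (mkeq r s).
Definition mkand {A G} (p q : tm A G To) : tm A G To := tapp (tapp tand p) q.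
Definition mkor {A G} (p q : tm A G To) : tm A G To := tapp (tapp tor p) q.
Definition mkforall {A G a} (phi : tm A (a :: G) To) : tm A G To :=
  mkeq (tlam phi) (tlam ttop).
Definition mkexists {A G a} (phi : tm A (a :: G) To) : tm A G To :=
  mkneq (tlam phi) (tlam tbot).

Fixpoint bigand {A G} (l : list (tm A G To)) : tm A G To :=
  match l with
  | [] => ttop
  | [p] => p
  | p :: l' => mkand p (bigand l')
  end.
Fixpoint bigor {A G} (l : list (tm A G To)) : tm A G To :=
  match l with
  | [] => tbot
  | [p] => p
  | p :: l' => mkor p (bigor l')
  end.

Definition lift_ren {G D : list ty} (b : ty) (r : forall a, var G a -> var D a)
  : forall a, var (b :: G) a -> var (b :: D) a :=
  fun a v =>
    match v in var L a' return
      (match L with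
       | [] => unit
       | b' :: G' => (forall c, var G' c -> var D c) -> var (b' :: D) a'
       end) with
    | VZ => fun _ => VZ
    | VS v' => fun r => VS (r _ v')
    end r.

Fixpoint rename {A} {G D : list ty} (r : forall a, var G a -> var D a)
  {a} (t : tm A G a) : tm A D a :=
  match t in tm _ G' a' return (forall c, var G' c -> var D c) -> tm A D a' with
  | tvar v => fun r => tvar (r _ v)
  | tcon c => fun _ => tcon c
  | tapp t u => fun r => tapp (rename r t) (rename r u)
  | tlam t => fun r => tlam (rename (lift_ren _ r) t)
  | teq a => fun _ => teq a
  | ttop => fun _ => ttop
  | tbot => fun _ => tbot
  | tnot => fun _ => tnot
  | tand => fun _ => tand
  | tor => fun _ => tor
  end r.

Definition lift_sub {A} {G D : list ty} (b : ty) (s : forall a, var G a -> tm A D a)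
  : forall a, var (b :: G) a -> tm A (b :: D) a :=
  fun a v =>
    match v in var L a' return
      (match L with
       | [] => unit
       | b' :: G' => (forall c, var G' c -> tm A D c) -> tm A (b' :: D) a'
       end) with
    | VZ => fun _ => tvar VZ
    | VS v' => fun s => rename (fun c w => VS w) (s _ v')
    end s.

Fixpoint subst {A} {G D : list ty} (s : forall a, var G a -> tm A D a)
  {a} (t : tm A G a) : tm A D a :=
  match t in tm _ G' a' return (forall c, var G' c -> tm A D c) -> tm A D a' with
  | tvar v => fun s => s _ v
  | tcon c => fun _ => tcon c
  | tapp t u => fun s => tapp (subst s t) (subst s u)
  | tlam t => fun s => tlam (subst (lift_sub _ s) t)
  | teq a => fun _ => teq a
  | ttop => fun _ => ttop
  | tbot => fun _ => tbot
  | tnot => fun _ => tnot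
  | tand => fun _ => tand
  | tor => fun _ => tor
  end s.

Definition sub_nil {A} {D : list ty} : forall a, var [] a -> tm A D a :=
  fun a v =>
    match v in var L a' return (match L with [] => tm A D a' | _ => unit end) with
    | VZ => tt
    | VS _ => tt
    end.

Definition sub_cons {A} {G D : list ty} {b : ty} (t : tm A D b)
  (s : forall a, var G a -> tm A D a) : forall a, var (b :: G) a -> tm A D a :=
  fun a v =>
    match v in var L a' return
      (match L with
       | [] => unit
       | b' :: G' => tm A D b' -> (forall c, var G' c -> tm A D c) -> tm A D a'
       end) with
    | VZ => fun t _ => t
    | VS v' => fun _ s => s _ v'
    end t s.

Definition subst1 {A a b} (phi : tm A [a] b) (t : closed A a) : closed A b :=
  subst (sub_cons t sub_nil) phi.

Definition econs {D : ty -> Type} {G : list ty} {b : ty} (x : D b)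
  (e : forall c, var G c -> D c) : forall c, var (b :: G) c -> D c :=
  fun a v =>
    match v in var L a' return
      (match L with
       | [] => unit
       | b' :: G' => D b' -> (forall c, var G' c -> D c) -> D a'
       end) with
    | VZ => fun x _ => x
    | VS v' => fun _ e => e _ v'
    end x e.

Definition enil {D : ty -> Type} : forall c, var [] c -> D c :=
  fun a v =>
    match v in var L a' return (match L with [] => D a' | _ => unit end) with
    | VZ => tt
    | VS _ => tt
    end.

(* Henkin semantics: an extensional applicative structure with
   D_o = {true,false}, nonempty domains, and a valuation function
   for all terms satisfying the usual clauses (Andrews' general models);
   the logical constants get their standard meaning. *)
Definition dom (Di : Type) (Df : ty -> ty -> Type) (t : ty) : Type :=
  match t with To => bool | Ti => Di | Tarr a b => Df a b end.

Record henkin (A : alphabet) := {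
  Di : Type;
  Df : ty -> ty -> Type;
  Di_inh : inhabited Di;
  Df_inh : forall a b, inhabited (Df a b);
  app : forall a b, Df a b -> dom Di Df a -> dom Di Df b;
  app_ext : forall a b (f g : Df a b), (forall x, app a b f x = app a b g x) -> f = g;
  cint : forall c : const A, dom Di Df (ctype A c);
  V : forall G a, tm A G a -> (forall c, var G c -> dom Di Df c) -> dom Di Df a;
  V_var : forall G a (v : var G a) e, V G a (tvar v) e = e a v;
  V_con : forall G c e, V G _ (tcon c) e = cint c;
  V_app : forall G a b (t : tm A G (Tarr a b)) (u : tm A G a) e,
      V G b (tapp t u) e = app a b (V G _ t e) (V G a u e);
  V_lam : forall G a b (t : tm A (a :: G) b) e x,
      app a b (V G _ (tlam t) e) x = V (a :: G) b t (econs (D := dom Di Df) x e);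
  V_eq : forall G a e (x y : dom Di Df a),
      app a To (app a (Tarr a To) (V G _ (teq a) e) x) y = true <-> x = y;
  V_top : forall G e, V G To ttop e = true;
  V_bot : forall G e, V G To tbot e = false;
  V_not : forall G e x, app To To (V G _ tnot e) x = negb x;
  V_and : forall G e x y,
      app To To (app To (Tarr To To) (V G _ tand e) x) y = andb x y;
  V_or : forall G e x y,
      app To To (app To (Tarr To To) (V G _ tor e) x) y = orb x y
}.
Arguments V {A} h {G a}.

Definition true_in {A} (M : henkin A) (phi : sentence A) : Prop :=
  V M phi (enil (D := dom (Di A M) (Df A M))) = true.
Definition valid {A} (phi : sentence A) : Prop := forall M : henkin A, true_in M phi.

Definition countable_alphabet (A : alphabet) : Prop :=
  exists f : const A -> nat, forall x y, f x = f y -> x = y.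

Definition probability {A} (mu : sentence A -> R) : Prop :=
  (forall phi, 0 <= mu phi) /\
  (forall phi, valid phi -> mu phi = 1) /\
  (forall phi psi, valid (mkneg (mkand phi psi)) -> mu (mkor phi psi) = mu phi + mu psi).

Definition is_glb (E : R -> Prop) (m : R) : Prop :=
  (forall x, E x -> m <= x) /\ (forall y, (forall x, E x -> y <= x) -> y <= m).

(* Gaifman: mu(r = s) = inf over finite sets {t1..tn} of closed terms of type a
   of mu(/\_i (r ti = s ti)); finite sets are given as lists. *)
Definition gaifman {A} (mu : sentence A -> R) : Prop :=
  forall (a b : ty) (r s : closed A (Tarr a b)),
    is_glb (fun x => exists l : list (closed A a),
                x = mu (bigand (map (fun t => mkeq (tapp r t) (tapp s t)) l)))
           (mu (mkeq r s)).

(* Enumerations t1, t2, ... of closed terms of type a.  An enumeration is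
   a sequence e : nat -> option (closed A a) (None = no entry, so that
   finite -- even empty -- enumerations are allowed). *)
Fixpoint somes {X} (l : list (option X)) : list X :=
  match l with
  | [] => []
  | Some x :: l' => x :: somes l'
  | None :: l' => somes l'
  end.

Definition first_n {X} (e : nat -> option X) (n : nat) : list X :=
  somes (map e (seq 0 n)).

Definition enumeration {A} (a : ty) (e : nat -> option (closed A a)) : Prop :=
  forall t : closed A a, exists n, e n = Some t.

Definition rep_enumeration {A} (a : ty) (e : nat -> option (closed A a)) : Prop :=
  (forall t : closed A a, exists n u, e n = Some u /\ valid (mkeq t u)) /\
  (forall n m u v, e n = Some u -> e m = Some v -> valid (mkeq u v) -> u = v).

Definition enum_kind {A} (rep : bool) (a : ty) (e : nat -> option (closed A a)) : Prop :=
  if rep then rep_enumeration a e else enumeration a e.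

Definition cond2 {A} (rep : bool) (mu : sentence A -> R) : Prop :=
  forall (a b : ty) (r s : closed A (Tarr a b)) (e : nat -> option (closed A a)),
    enum_kind rep a e ->
    Un_cv (fun n => mu (bigand (map (fun t => mkeq (tapp r t) (tapp s t)) (first_n e n))))
          (mu (mkeq r s)).

Definition cond3 {A} (rep : bool) (mu : sentence A -> R) : Prop :=
  forall (a b : ty) (r s : closed A (Tarr a b)) (e : nat -> option (closed A a)),
    enum_kind rep a e ->
    Un_cv (fun n => mu (bigor (map (fun t => mkneq (tapp r t) (tapp s t)) (first_n e n))))
          (mu (mkneq r s)).

Definition cond4 {A} (rep : bool) (mu : sentence A -> R) : Prop :=
  forall (a : ty) (phi : tm A [a] To) (e : nat -> option (closed A a)),
    enum_kind rep a e ->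
    Un_cv (fun n => mu (bigor (map (subst1 phi) (first_n e n))))
          (mu (mkexists phi)).

Definition cond5 {A} (rep : bool) (mu : sentence A -> R) : Prop :=
  forall (a : ty) (phi : tm A [a] To) (e : nat -> option (closed A a)),
    enum_kind rep a e ->
    Un_cv (fun n => mu (bigand (map (subst1 phi) (first_n e n))))
          (mu (mkforall phi)).

(* The limits in (2)-(5) are taken along initial segments of an enumeration, and every
   finite set of closed terms is covered, up to valid equality, by all long enough initial
   segments; since mu is monotone under entailment and mu(r = s) bounds every finite
   conjunction from below, the infimum in the Gaifman condition is exactly the limit in
   (2).  Enumerations of both kinds exist because a countable alphabet makes closed terms
   injectively codable by naturals; keeping the element of least code in each class of
   valid equality gives the representative one.  (3) is the complement of (2).  Condition
   (5) is (2) for r = \x.phi and s = \x.T, and conversely, by extensionality, (2) is (5) for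
   phi = (r x = s x); (4) and (3) correspond in the same way via \x.F and disequality. *)

From Pilot Require Import Defs.
From Stdlib Require Import Reals List Lra Lia Bool Program.Equality FunctionalExtensionality
  Eqdep_dec RelationClasses ClassicalEpsilon Classical Wf_nat Cantor.
Import ListNotations.
Open Scope R_scope.

Section Semantics.
Variable A : alphabet.
Local Notation dom_of M := (dom (Di A M) (Df A M)).

Lemma V_logical_const_env (M : henkin A) G G' (e : forall c, var G c -> dom_of M c)
  (e' : forall c, var G' c -> dom_of M c) :
  (forall a, V M (teq a) e = V M (teq a) e') /\
  V M ttop e = V M ttop e' /\ V M tbot e = V M tbot e' /\
  V M tnot e = V M tnot e' /\ V M Defs.tand e = V M Defs.tand e' /\ V M tor e = V M tor e'.
Proof.
  repeat split.
  - intro a. apply app_ext; intro x. apply app_ext; intro y.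
    apply eq_true_iff_eq. rewrite !V_eq. reflexivity.
  - rewrite !V_top. reflexivity.
  - rewrite !V_bot. reflexivity.
  - apply app_ext; intro x. rewrite !V_not. reflexivity.
  - apply app_ext; intro x. apply app_ext; intro y. rewrite !V_and. reflexivity.
  - apply app_ext; intro x. apply app_ext; intro y. rewrite !V_or. reflexivity.
Qed.

Lemma V_rename (M : henkin A) G G' (r : forall a, var G a -> var G' a) a (t : tm A G a)
  (e : forall c, var G' c -> dom_of M c) :
  V M (rename r t) e = V M t (fun c v => e c (r c v)).
Proof.
  revert G' r e.
  induction t; intros G' r e; simpl; try apply V_logical_const_env.
  - rewrite !V_var. reflexivity.
  - rewrite !V_con. reflexivity.
  - rewrite !V_app, IHt1, IHt2. reflexivity.
  - apply app_ext. intro x. rewrite !V_lam, IHt. f_equal.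
    apply functional_extensionality_dep. intro c.
    apply functional_extensionality. intro v. dependent destruction v; reflexivity.
Qed.

Lemma V_subst (M : henkin A) G G' (s : forall a, var G a -> tm A G' a) a (t : tm A G a)
  (e : forall c, var G' c -> dom_of M c) :
  V M (subst s t) e = V M t (fun c v => V M (s c v) e).
Proof.
  revert G' s e.
  induction t; intros G' s e; simpl; try apply V_logical_const_env.
  - rewrite !V_var. reflexivity.
  - rewrite !V_con. reflexivity.
  - rewrite !V_app, IHt1, IHt2. reflexivity.
  - apply app_ext. intro x. rewrite !V_lam, IHt. f_equal.
    apply functional_extensionality_dep. intro c.
    apply functional_extensionality. intro v. dependent destruction v; simpl.
    + rewrite V_var. reflexivity.
    + rewrite V_rename. reflexivity.
Qed.

Lemma V_subst1 (M : henkin A) a b (phi : tm A [a] b) (t : closed A a) :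
  V M (subst1 phi t) enil = V M phi (econs (V M t enil) enil).
Proof.
  unfold subst1. rewrite V_subst. f_equal.
  apply functional_extensionality_dep. intro c.
  apply functional_extensionality. intro v.
  dependent destruction v; [reflexivity | dependent destruction v].
Qed.

Lemma V_mkneg (M : henkin A) G (e : forall c, var G c -> dom_of M c) p :
  V M (mkneg p) e = negb (V M p e).
Proof. unfold mkneg. rewrite V_app, V_not. reflexivity. Qed.

Lemma V_mkand (M : henkin A) G (e : forall c, var G c -> dom_of M c) p q :
  V M (mkand p q) e = V M p e && V M q e.
Proof. unfold mkand. rewrite !V_app, V_and. reflexivity. Qed.

Lemma V_mkor (M : henkin A) G (e : forall c, var G c -> dom_of M c) p q :
  V M (mkor p q) e = V M p e || V M q e.
Proof. unfold mkor. rewrite !V_app, V_or. reflexivity. Qed.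

Lemma V_mkeq (M : henkin A) G (e : forall c, var G c -> dom_of M c) a (x y : tm A G a) :
  V M (mkeq x y) e = true <-> V M x e = V M y e.
Proof. unfold mkeq. rewrite !V_app. apply V_eq. Qed.

Lemma V_mkeq_bool (M : henkin A) G (e : forall c, var G c -> dom_of M c) (x y : tm A G To) :
  V M (mkeq x y) e = eqb (V M x e) (V M y e).
Proof. apply eq_true_iff_eq. rewrite V_mkeq, eqb_true_iff. reflexivity. Qed.

Lemma V_bigand (M : henkin A) G (e : forall c, var G c -> dom_of M c) l :
  V M (bigand l) e = forallb (fun p : tm A G To => V M p e) l.
Proof.
  induction l as [|p [|q l] IH].
  - apply V_top.
  - simpl. rewrite andb_true_r. reflexivity.
  - change (V M (mkand p (bigand (q :: l))) e =
            V M p e && forallb (fun p : tm A G To => V M p e) (q :: l)).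
    rewrite V_mkand, IH. reflexivity.
Qed.

Lemma V_bigor (M : henkin A) G (e : forall c, var G c -> dom_of M c) l :
  V M (bigor l) e = existsb (fun p : tm A G To => V M p e) l.
Proof.
  induction l as [|p [|q l] IH].
  - apply V_bot.
  - simpl. rewrite orb_false_r. reflexivity.
  - change (V M (mkor p (bigor (q :: l))) e =
            V M p e || existsb (fun p : tm A G To => V M p e) (q :: l)).
    rewrite V_mkor, IH. reflexivity.
Qed.

Lemma app_ext_iff (M : henkin A) a b (f g : dom_of M (Tarr a b)) :
  f = g <-> forall x, Defs.app A M a b f x = Defs.app A M a b g x.
Proof. split; [intros -> x; reflexivity | apply app_ext]. Qed.

Lemma V_mkeq_lam (M : henkin A) a (phi psi : tm A [a] To) :
  V M (mkeq (tlam phi) (tlam psi)) enil = true <->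
  forall x, V M phi (econs x enil) = V M psi (econs x enil).
Proof.
  rewrite V_mkeq, app_ext_iff.
  split; intros H x; specialize (H x); rewrite !V_lam in *; exact H.
Qed.

End Semantics.

Definition sem_equiv {A a} (t u : closed A a) : Prop :=
  forall M : henkin A, V M t enil = V M u enil.

Section SemanticEquivalence.
Variable A : alphabet.

Lemma sem_equiv_refl a (t : closed A a) : sem_equiv t t.
Proof. intro M. reflexivity. Qed.

Lemma sem_equiv_sym a (t u : closed A a) : sem_equiv t u -> sem_equiv u t.
Proof. intros H M. symmetry. apply H. Qed.

Lemma valid_mkeq_iff a (t u : closed A a) : valid (mkeq t u) <-> sem_equiv t u.
Proof. split; intros H M; apply V_mkeq, H. Qed.

Lemma valid_mkeq_equivalence a : Equivalence (fun t u : closed A a => valid (mkeq t u)).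
Proof.
  split.
  - intro t. apply valid_mkeq_iff, sem_equiv_refl.
  - intros t u. rewrite !valid_mkeq_iff. apply sem_equiv_sym.
  - intros t u w. rewrite !valid_mkeq_iff. intros Htu Huw M. rewrite Htu. apply Huw.
Qed.

Lemma sem_equiv_mkneg (p q : sentence A) : sem_equiv p q -> sem_equiv (mkneg p) (mkneg q).
Proof. intros H M. rewrite !V_mkneg, H. reflexivity. Qed.

Lemma sem_equiv_bigand_map {X} (F G : X -> sentence A) l :
  (forall x, sem_equiv (F x) (G x)) -> sem_equiv (bigand (map F l)) (bigand (map G l)).
Proof.
  intros H M. rewrite !V_bigand.
  induction l as [|x l IH]; simpl; [reflexivity|]. rewrite H, IH. reflexivity.
Qed.

Lemma sem_equiv_bigor_map {X} (F G : X -> sentence A) l :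
  (forall x, sem_equiv (F x) (G x)) -> sem_equiv (bigor (map F l)) (bigor (map G l)).
Proof.
  intros H M. rewrite !V_bigor.
  induction l as [|x l IH]; simpl; [reflexivity|]. rewrite H, IH. reflexivity.
Qed.

Lemma sem_equiv_bigor_mkneg {X} (F : X -> sentence A) l :
  sem_equiv (bigor (map (fun x => mkneg (F x)) l)) (mkneg (bigand (map F l))).
Proof.
  intro M. rewrite V_bigor, V_mkneg, V_bigand.
  induction l as [|x l IH]; simpl; [reflexivity|].
  rewrite V_mkneg, IH, negb_andb. reflexivity.
Qed.

End SemanticEquivalence.

Definition weaken {A a b} (r : closed A b) : tm A [a] b :=
  rename (fun c (w : var [] c) => @VS [] c a w) r.

Definition pointwise_eq {A a b} (r s : closed A (Tarr a b)) : tm A [a] To :=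
  mkeq (tapp (weaken r) (tvar VZ)) (tapp (weaken s) (tvar VZ)).

Section Extensionality.
Variable A : alphabet.

Lemma V_pointwise_eq (M : henkin A) a b (r s : closed A (Tarr a b)) x :
  V M (pointwise_eq r s) (econs x enil) = true <->
  Defs.app A M a b (V M r enil) x = Defs.app A M a b (V M s enil) x.
Proof.
  unfold pointwise_eq, weaken. rewrite V_mkeq, !V_app, !V_rename, V_var. reflexivity.
Qed.

Lemma sem_equiv_subst1_pointwise_eq a b (r s : closed A (Tarr a b)) (t : closed A a) :
  sem_equiv (subst1 (pointwise_eq r s) t) (mkeq (tapp r t) (tapp s t)).
Proof.
  intro M. apply eq_true_iff_eq.
  rewrite V_subst1, V_pointwise_eq, V_mkeq, !V_app. reflexivity.
Qed.

Lemma sem_equiv_forall_pointwise_eq a b (r s : closed A (Tarr a b)) :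
  sem_equiv (mkforall (pointwise_eq r s)) (mkeq r s).
Proof.
  intro M. apply eq_true_iff_eq. unfold mkforall.
  rewrite V_mkeq_lam, V_mkeq, app_ext_iff.
  split; intros H x; specialize (H x); rewrite V_top, V_pointwise_eq in *; exact H.
Qed.

Lemma sem_equiv_exists_neg_pointwise_eq a b (r s : closed A (Tarr a b)) :
  sem_equiv (mkexists (mkneg (pointwise_eq r s))) (mkneq r s).
Proof.
  apply sem_equiv_mkneg. intro M. apply eq_true_iff_eq.
  rewrite V_mkeq_lam, V_mkeq, app_ext_iff.
  split; intros H x; specialize (H x); rewrite V_bot, V_mkneg, negb_false_iff,
    V_pointwise_eq in *; exact H.
Qed.

Lemma sem_equiv_mkeq_beta_top a (phi : tm A [a] To) (t : closed A a) :
  sem_equiv (mkeq (tapp (tlam phi) t) (tapp (tlam ttop) t)) (subst1 phi t).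
Proof.
  intro M. rewrite V_mkeq_bool, !V_app, !V_lam, V_top, V_subst1.
  destruct (V M phi _); reflexivity.
Qed.

Lemma sem_equiv_mkneq_beta_bot a (phi : tm A [a] To) (t : closed A a) :
  sem_equiv (mkneq (tapp (tlam phi) t) (tapp (tlam tbot) t)) (subst1 phi t).
Proof.
  intro M. unfold mkneq. rewrite V_mkneg, V_mkeq_bool, !V_app, !V_lam, V_bot, V_subst1.
  destruct (V M phi _); reflexivity.
Qed.

End Extensionality.

Lemma Un_cv_one_minus_iff (u : nat -> R) (l : R) :
  Un_cv (fun n => 1 - u n) (1 - l) <-> Un_cv u l.
Proof.
  assert (Hdist : forall n, R_dist (1 - u n) (1 - l) = R_dist (u n) l).
  { intro n. unfold R_dist. rewrite <- Rabs_Ropp. f_equal. ring. }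
  split; intros H eps Heps; destruct (H eps Heps) as [N HN]; exists N; intros n Hn;
    [rewrite <- Hdist | rewrite Hdist]; auto.
Qed.

Section Probability.
Variable A : alphabet.
Variable mu : sentence A -> R.
Hypothesis mu_prob : probability mu.

Lemma mu_mkneg (p : sentence A) : mu (mkneg p) = 1 - mu p.
Proof.
  destruct mu_prob as [_ [mu_valid mu_add]].
  assert (Hadd : mu (mkor p (mkneg p)) = mu p + mu (mkneg p)).
  { apply mu_add. intro M. unfold true_in.
    rewrite V_mkneg, V_mkand, V_mkneg. destruct (V M p enil); reflexivity. }
  rewrite mu_valid in Hadd; [lra|].
  intro M. unfold true_in. rewrite V_mkor, V_mkneg. destruct (V M p enil); reflexivity.
Qed.

Lemma mu_sem_equiv (p q : sentence A) : sem_equiv p q -> mu p = mu q.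
Proof.
  intro Hpq. destruct mu_prob as [_ [mu_valid mu_add]].
  assert (Hadd : mu (mkor q (mkneg p)) = mu q + mu (mkneg p)).
  { apply mu_add. intro M. unfold true_in.
    rewrite V_mkneg, V_mkand, V_mkneg, Hpq. destruct (V M q enil); reflexivity. }
  rewrite mu_valid, mu_mkneg in Hadd; [lra|].
  intro M. unfold true_in. rewrite V_mkor, V_mkneg, Hpq. destruct (V M q enil); reflexivity.
Qed.

Lemma mu_monotone (p q : sentence A) :
  (forall M : henkin A, V M p enil = true -> V M q enil = true) -> mu p <= mu q.
Proof.
  intro Hpq. destruct mu_prob as [mu_ge0 [_ mu_add]].
  (* q is equivalent to the disjoint union of p and q /\ ~p *)
  assert (Hadd : mu (mkor p (mkand q (mkneg p))) = mu p + mu (mkand q (mkneg p))).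
  { apply mu_add. intro M. unfold true_in. rewrite V_mkneg, !V_mkand, V_mkneg.
    destruct (V M p enil), (V M q enil); reflexivity. }
  assert (Hq : mu q = mu (mkor p (mkand q (mkneg p)))).
  { apply mu_sem_equiv. intro M. rewrite V_mkor, V_mkand, V_mkneg.
    specialize (Hpq M). destruct (V M p enil), (V M q enil); auto. }
  specialize (mu_ge0 (mkand q (mkneg p))). lra.
Qed.

Lemma Un_cv_mu_mkneg (p : nat -> sentence A) (q : sentence A) :
  Un_cv (fun n => mu (mkneg (p n))) (mu (mkneg q)) <-> Un_cv (fun n => mu (p n)) (mu q).
Proof.
  rewrite <- (Un_cv_one_minus_iff (fun n => mu (p n))), mu_mkneg.
  split; apply Un_cv_ext; intro n; rewrite mu_mkneg; reflexivity.
Qed.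

Lemma Un_cv_mu_sem_equiv (p q : nat -> sentence A) (p0 q0 : sentence A) :
  (forall n, sem_equiv (p n) (q n)) -> sem_equiv p0 q0 ->
  Un_cv (fun n => mu (p n)) (mu p0) -> Un_cv (fun n => mu (q n)) (mu q0).
Proof.
  intros Hpq Hpq0. rewrite (mu_sem_equiv _ _ Hpq0).
  apply Un_cv_ext. intro n. apply mu_sem_equiv, Hpq.
Qed.

End Probability.

Lemma is_glb_iff_Un_cv {X} (E : list X -> R) (L : nat -> list X) (m : R) :
  (forall l, m <= E l) ->
  (forall l, exists N, forall n, (N <= n)%nat -> E (L n) <= E l) ->
  is_glb (fun x => exists l, x = E l) m <-> Un_cv (fun n => E (L n)) m.
Proof.
  intros Hlower Hcofinal. split.
  - intros [_ Hgreatest] eps Heps.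
    assert (Hclose : exists l, E l < m + eps).
    { apply NNPP. intro Hfar.
      enough (m + eps <= m) by lra.
      apply Hgreatest. intros x [l ->]. apply Rnot_lt_le. intro Hl. apply Hfar. eauto. }
    destruct Hclose as [l Hl]. destruct (Hcofinal l) as [N HN].
    exists N. intros n Hn. specialize (HN n Hn). specialize (Hlower (L n)).
    unfold R_dist. rewrite Rabs_right; lra.
  - intro Hcv. split; [intros x [l ->]; apply Hlower|].
    intros y Hy. apply Rnot_lt_le. intro Hmy.
    destruct (Hcv (y - m)) as [N HN]; [lra|].
    specialize (HN N (le_n N)). specialize (Hy (E (L N)) (ex_intro _ (L N) eq_refl)).
    unfold R_dist in HN. apply Rabs_def2 in HN. lra.
Qed.

Section Decoding.
Variable X : Type.
Variable code : X -> nat.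
Hypothesis code_inj : forall x y, code x = code y -> x = y.

Definition decode (n : nat) : option X :=
  match excluded_middle_informative (exists x, code x = n) with
  | left H => Some (proj1_sig (constructive_indefinite_description _ H))
  | right _ => None
  end.

Lemma decode_code x : decode (code x) = Some x.
Proof.
  unfold decode. destruct excluded_middle_informative as [H|H]; [|exfalso; eauto].
  destruct constructive_indefinite_description as [y Hy]. simpl. f_equal. auto.
Qed.

Variable equiv : X -> X -> Prop.
Hypothesis equiv_equivalence : Equivalence equiv.

Definition least_in_class (x : X) : Prop := forall y, equiv x y -> (code x <= code y)%nat.

Definition rep_decode (n : nat) : option X :=
  match decode n with
  | Some x => if excluded_middle_informative (least_in_class x) then Some x else None
  | None => None
  end.

Lemma rep_decode_complete x : exists n y, rep_decode n = Some y /\ equiv x y.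
Proof.
  destruct (dec_inh_nat_subset_has_unique_least_element
              (fun k => exists y, equiv x y /\ code y = k)) as [k [[[y [Hxy Hy]] Hleast] _]].
  - intro k. apply classic.
  - exists (code x), x. split; [reflexivity | auto].
  - assert (Hy_least : least_in_class y).
    { intros z Hyz. rewrite Hy. apply Hleast. exists z. split; auto. etransitivity; eauto. }
    exists (code y), y. unfold rep_decode. rewrite decode_code.
    destruct excluded_middle_informative; [auto | contradiction].
Qed.

Lemma rep_decode_unique n m x y :
  rep_decode n = Some x -> rep_decode m = Some y -> equiv x y -> x = y.
Proof.
  unfold rep_decode.
  destruct (decode n) as [x'|]; [|discriminate].
  destruct excluded_middle_informative as [Hx|]; [|discriminate]. intros [= <-].
  destruct (decode m) as [y'|]; [|discriminate].
  destruct excluded_middle_informative as [Hy|]; [|discriminate]. intros [= <-].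
  intro Hxy. apply code_inj, Nat.le_antisymm; [apply Hx | apply Hy]; auto. symmetry. exact Hxy.
Qed.

End Decoding.

Lemma to_nat_inj (p q : nat * nat) : Cantor.to_nat p = Cantor.to_nat q -> p = q.
Proof. intro H. rewrite <- (cancel_of_to p), <- (cancel_of_to q), H. reflexivity. Qed.

Arguments Cantor.to_nat : simpl never.

Lemma ty_eq_dec (a b : ty) : {a = b} + {a <> b}.
Proof. decide equality. Qed.

Lemma existT_ty_inj (P : ty -> Type) a (x y : P a) : existT P a x = existT P a y -> x = y.
Proof. apply inj_pair2_eq_dec, ty_eq_dec. Qed.

Fixpoint ty_code (t : ty) : nat :=
  match t with
  | To => Cantor.to_nat (0, 0)
  | Ti => Cantor.to_nat (1, 0)
  | Tarr a b => Cantor.to_nat (2, Cantor.to_nat (ty_code a, ty_code b))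
  end%nat.

Lemma ty_code_inj a b : ty_code a = ty_code b -> a = b.
Proof.
  revert b; induction a; destruct b; simpl; intro H; apply to_nat_inj in H;
    try discriminate H; auto.
  injection H as H. apply to_nat_inj in H. injection H as H1 H2. f_equal; auto.
Qed.

Fixpoint var_code {G a} (v : var G a) : nat :=
  match v with
  | VZ => 0
  | VS v' => S (var_code v')
  end%nat.

Lemma var_code_inj G a (v : var G a) a' (v' : var G a') :
  var_code v = var_code v' -> existT (var G) a v = existT (var G) a' v'.
Proof.
  induction v; intro H; dependent destruction v'; simpl in H; try discriminate H.
  - reflexivity.
  - injection H as H. apply IHv in H.
    assert (a = a0) by exact (f_equal (@projT1 _ _) H). subst.
    apply existT_ty_inj in H. subst. reflexivity.
Qed.

Section TermCode.
Variable A : alphabet.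
Variable const_code : const A -> nat.
Hypothesis const_code_inj : forall c d, const_code c = const_code d -> c = d.

Fixpoint tm_code {G a} (t : tm A G a) : nat :=
  match t with
  | tvar v => Cantor.to_nat (0, var_code v)
  | tcon c => Cantor.to_nat (1, const_code c)
  | tapp t u => Cantor.to_nat (2, Cantor.to_nat (tm_code t, tm_code u))
  | @tlam _ _ a _ t => Cantor.to_nat (3, Cantor.to_nat (ty_code a, tm_code t))
  | teq a => Cantor.to_nat (4, ty_code a)
  | ttop => Cantor.to_nat (5, 0)
  | tbot => Cantor.to_nat (6, 0)
  | tnot => Cantor.to_nat (7, 0)
  | Defs.tand => Cantor.to_nat (8, 0)
  | tor => Cantor.to_nat (9, 0)
  end%nat.

Lemma tm_code_inj G a (t : tm A G a) a' (t' : tm A G a') :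
  tm_code t = tm_code t' -> existT (tm A G) a t = existT (tm A G) a' t'.
Proof.
  revert a' t'.
  induction t; intros a' t' H; dependent destruction t'; simpl in H;
    apply to_nat_inj in H; try discriminate H; try reflexivity.
  - injection H as H. apply var_code_inj in H.
    assert (a = a0) by exact (f_equal (@projT1 _ _) H). subst.
    apply existT_ty_inj in H. subst. reflexivity.
  - injection H as H. apply const_code_inj in H. subst. reflexivity.
  - injection H as H. apply to_nat_inj in H. injection H as H1 H2.
    apply IHt1 in H1.
    assert (E : Tarr a b = Tarr a0 b0) by exact (f_equal (@projT1 _ _) H1).
    injection E as <- <-. apply existT_ty_inj in H1. subst.
    apply IHt2, existT_ty_inj in H2. subst. reflexivity.
  - injection H as H. apply to_nat_inj in H. injection H as H1 H2.
    apply ty_code_inj in H1. subst. apply IHt in H2.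
    assert (b = b0) by exact (f_equal (@projT1 _ _) H2). subst.
    apply existT_ty_inj in H2. subst. reflexivity.
  - injection H as H. apply ty_code_inj in H. subst. reflexivity.
Qed.

End TermCode.

Lemma exists_enumeration {A} (rep : bool) (a : ty) :
  countable_alphabet A -> exists e : nat -> option (closed A a), enum_kind rep a e.
Proof.
  intros [const_code const_code_inj].
  assert (code_inj : forall t u : closed A a,
             tm_code A const_code t = tm_code A const_code u -> t = u).
  { intros t u H. apply tm_code_inj, existT_ty_inj in H; auto. }
  destruct rep; simpl.
  - exists (rep_decode _ (tm_code A const_code) (fun t u => valid (mkeq t u))).
    split; [apply rep_decode_complete | apply rep_decode_unique];
      auto using valid_mkeq_equivalence.
  - exists (decode _ (tm_code A const_code)). intro t.
    exists (tm_code A const_code t). apply decode_code; auto.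
Qed.

Lemma In_somes {X} (l : list (option X)) x : In x (somes l) <-> In (Some x) l.
Proof.
  induction l as [|[y|] l IH]; simpl.
  - reflexivity.
  - rewrite IH. split; intros [H|H]; auto; left; congruence.
  - rewrite IH. split; auto. intros [H|H]; [discriminate | auto].
Qed.

Lemma In_first_n {X} (e : nat -> option X) n x :
  In x (first_n e n) <-> exists k, (k < n)%nat /\ e k = Some x.
Proof.
  unfold first_n. rewrite In_somes, in_map_iff. split.
  - intros [k [Hk Hin]]. apply in_seq in Hin. exists k. split; [lia | auto].
  - intros [k [Hk Hin]]. exists k. split; auto. apply in_seq. lia.
Qed.

Section Enumerations.
Variable A : alphabet.

Lemma enum_kind_complete rep a (e : nat -> option (closed A a)) :
  enum_kind rep a e -> forall t, exists k u, e k = Some u /\ sem_equiv t u.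
Proof.
  destruct rep; simpl; intros He t.
  - destruct He as [He _]. destruct (He t) as [k [u [Hk Htu]]].
    exists k, u. split; [exact Hk | apply valid_mkeq_iff, Htu].
  - destruct (He t) as [k Hk]. exists k, t. split; [exact Hk | apply sem_equiv_refl].
Qed.

Lemma first_n_eventually_covers rep a (e : nat -> option (closed A a)) :
  enum_kind rep a e -> forall l, exists N, forall n, (N <= n)%nat ->
    forall t, In t l -> exists u, In u (first_n e n) /\ sem_equiv t u.
Proof.
  intros He l. induction l as [|t l [N HN]].
  - exists 0%nat. intros n _ t [].
  - destruct (enum_kind_complete rep a e He t) as [k [u [Hk Htu]]].
    exists (Nat.max N (S k)). intros n Hn t' [<-|Ht'].
    + exists u. split; [|exact Htu]. apply In_first_n. exists k. split; [lia | exact Hk].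
    + apply HN; [lia | exact Ht'].
Qed.

End Enumerations.

Section Gaifman.
Variable A : alphabet.
Variable mu : sentence A -> R.
Hypothesis mu_prob : probability mu.

Definition agree_on {a b} (r s : closed A (Tarr a b)) (l : list (closed A a)) : sentence A :=
  bigand (map (fun t => mkeq (tapp r t) (tapp s t)) l).

Lemma mu_mkeq_le_agree_on a b (r s : closed A (Tarr a b)) l :
  mu (mkeq r s) <= mu (agree_on r s l).
Proof.
  apply mu_monotone; [exact mu_prob|]. intros M Hrs. unfold agree_on. rewrite V_bigand.
  apply forallb_forall. intros p Hp. apply in_map_iff in Hp. destruct Hp as [t [<- _]].
  apply V_mkeq. rewrite !V_app. apply V_mkeq in Hrs. rewrite Hrs. reflexivity.
Qed.

Lemma mu_agree_on_covered a b (r s : closed A (Tarr a b)) l l' :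
  (forall t, In t l -> exists u, In u l' /\ sem_equiv t u) ->
  mu (agree_on r s l') <= mu (agree_on r s l).
Proof.
  intro Hcover. apply mu_monotone; [exact mu_prob|]. intros M Hl'. unfold agree_on in *.
  rewrite V_bigand, forallb_forall in *. intros p Hp.
  apply in_map_iff in Hp. destruct Hp as [t [<- Ht]].
  destruct (Hcover t Ht) as [u [Hu Htu]].
  assert (Hru : V M (mkeq (tapp r u) (tapp s u)) enil = true).
  { apply Hl', in_map_iff. eauto. }
  apply V_mkeq. apply V_mkeq in Hru. rewrite !V_app in *. rewrite Htu. exact Hru.
Qed.

Lemma is_glb_agree_on_iff_Un_cv rep a b (r s : closed A (Tarr a b)) e :
  enum_kind rep a e ->
  is_glb (fun x => exists l, x = mu (agree_on r s l)) (mu (mkeq r s)) <->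
  Un_cv (fun n => mu (agree_on r s (first_n e n))) (mu (mkeq r s)).
Proof.
  intro He. apply (is_glb_iff_Un_cv (fun l => mu (agree_on r s l)) (first_n e)).
  { intro l. apply mu_mkeq_le_agree_on. }
  intro l. destruct (first_n_eventually_covers A rep a e He l) as [N HN].
  exists N. intros n Hn. apply mu_agree_on_covered, HN, Hn.
Qed.

Lemma gaifman_iff_cond2 rep : countable_alphabet A -> gaifman mu <-> cond2 rep mu.
Proof.
  intro HA. split.
  - intros Hg a b r s e He. apply (is_glb_agree_on_iff_Un_cv rep _ _ r s e He), Hg.
  - intros H2 a b r s. destruct (exists_enumeration rep a HA) as [e He].
    apply (is_glb_agree_on_iff_Un_cv rep _ _ r s e He), H2, He.
Qed.

Lemma cond2_iff_cond3 rep : cond2 rep mu <-> cond3 rep mu.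
Proof.
  split; intros H a b r s e He.
  - apply (Un_cv_mu_sem_equiv A mu mu_prob
             (fun n => mkneg (agree_on r s (first_n e n))) _ (mkneg (mkeq r s))).
    + intro n. apply sem_equiv_sym, sem_equiv_bigor_mkneg.
    + apply sem_equiv_refl.
    + apply (Un_cv_mu_mkneg A mu mu_prob), H, He.
  - apply (Un_cv_mu_mkneg A mu mu_prob (fun n => agree_on r s (first_n e n))).
    apply (Un_cv_mu_sem_equiv A mu mu_prob
             (fun n => bigor (map (fun t => mkneq (tapp r t) (tapp s t)) (first_n e n))) _
             (mkneq r s)).
    + intro n. apply sem_equiv_bigor_mkneg.
    + apply sem_equiv_refl.
    + apply H, He.
Qed.

Lemma cond2_iff_cond5 rep : cond2 rep mu <-> cond5 rep mu.
Proof.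
  split.
  - intros H a phi e He.
    apply (Un_cv_mu_sem_equiv A mu mu_prob _ _ _ _
             (fun n => sem_equiv_bigand_map A _ _ _ (sem_equiv_mkeq_beta_top A a phi))
             (sem_equiv_refl A To _)).
    apply (H a To (tlam phi) (tlam ttop) e He).
  - intros H a b r s e He.
    apply (Un_cv_mu_sem_equiv A mu mu_prob _ _ _ _
             (fun n => sem_equiv_bigand_map A _ _ _ (sem_equiv_subst1_pointwise_eq A a b r s))
             (sem_equiv_forall_pointwise_eq A a b r s)).
    apply (H a (pointwise_eq r s) e He).
Qed.

Lemma cond3_iff_cond4 rep : cond3 rep mu <-> cond4 rep mu.
Proof.
  split.
  - intros H a phi e He.
    apply (Un_cv_mu_sem_equiv A mu mu_prob _ _ _ _
             (fun n => sem_equiv_bigor_map A _ _ _ (sem_equiv_mkneq_beta_bot A a phi))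
             (sem_equiv_refl A To _)).
    apply (H a To (tlam phi) (tlam tbot) e He).
  - intros H a b r s e He.
    apply (Un_cv_mu_sem_equiv A mu mu_prob _ _ _ _
             (fun n => sem_equiv_bigor_map A _ _ _ (fun t =>
                sem_equiv_mkneg A _ _ (sem_equiv_subst1_pointwise_eq A a b r s t)))
             (sem_equiv_exists_neg_pointwise_eq A a b r s)).
    apply (H a (mkneg (pointwise_eq r s)) e He).
Qed.

End Gaifman.

Theorem mainTheorem7 (A : alphabet) (mu : sentence A -> R) :
  countable_alphabet A -> probability mu ->
  forall rep : bool,
    (gaifman mu <-> cond2 rep mu) /\
    (gaifman mu <-> cond3 rep mu) /\
    (gaifman mu <-> cond4 rep mu) /\
    (gaifman mu <-> cond5 rep mu).
Proof.
  intros HA Hmu rep.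
  pose proof (gaifman_iff_cond2 A mu Hmu rep HA).
  pose proof (cond2_iff_cond3 A mu Hmu rep).
  pose proof (cond3_iff_cond4 A mu Hmu rep).
  pose proof (cond2_iff_cond5 A mu Hmu rep).
  tauto.
Qed.
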